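(* Let $\Gamma$ be a finitely generated group equipped with the word metric associated with a finite generating set. Then $\Gamma$ has exponential growth if and only if $h_\infty(\Gamma)=\infty$ (and otherwise $h_\infty(\Gamma)=0$).
   Context: The word metric associated with a generating set $S$ is the path metric of the Cayley graph with vertex set $\Gamma$ and edges $\{\gamma,\gamma s\}$, $s\in S$. Non-decreasing functions $f,g\colon\mathbb N\to\mathbb N\cup\{\infty\}$ are equivalent if there is $D\in\mathbb N$ with $f(r)\le Dg(Dr)$ and $g(r)\le Df(Dr)$ for all $r$; $\Gamma$ has exponential growth if $r\mapsto|B(e,r)|$ is equivalent to $r\mapsto\exp(r)$. Coarse entropy $h_\infty(X)=\lim_{\delta\to\infty}\lim_{R\to\infty}\limsup_{n\to\infty}\frac1n\log s(n,R,\delta,x_0)$, where $s(n,R,\delta,x_0)$ is the supremum of cardinalities of $R$-separated sets of $\delta$-paths $(x_0,\dots,x_n)$ ($d(x_i,x_{i+1})\le\delta$) starting at $x_0$, paths compared by $\max_i d(x_i,y_i)$. *)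

From HB Require Import structures.
From mathcomp Require Import all_boot all_order all_algebra.
From mathcomp Require Import finmap.
From mathcomp Require Import all_classical all_reals all_analysis.

Set Implicit Arguments.
Unset Strict Implicit.
Unset Printing Implicit Defensive.

Import Order.TTheory GRing.Theory Num.Theory.
Local Open Scope classical_set_scope.
Local Open Scope ring_scope.

Section CoarseEntropy.
Variable G : groupType.

Definition generates (S : seq G) : Prop :=
  forall H : G -> Prop,
    H 1%g -> (forall x y, H x -> H y -> H (x * y)%g) -> (forall x, H x -> H (x^-1)%g) ->
    (forall s, s \in S -> H s) -> forall g, H g.

Definition cayley_edge (S : seq G) (a b : G) : Prop :=
  exists2 s, s \in S & (b = a * s)%g \/ (a = b * s)%g.

Definition cayley_path_len (S : seq G) (x y : G) (n : nat) : Prop :=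
  exists p : nat -> G, [/\ p 0%N = x, p n = y &
                          forall i, (i < n)%N -> cayley_edge S (p i) (p i.+1)].

Lemma cayley_ex_asbool (S : seq G) (x y : G) :
  (exists n, cayley_path_len S x y n) -> exists n, `[< cayley_path_len S x y n >].
Proof. by case=> n Hn; exists n; apply/asboolP. Qed.

(* Word metric = path metric of the Cayley graph (0 if no path, which never
   happens for a generating set). *)
Definition wdist (S : seq G) (x y : G) : nat :=
  match pselect (exists n, cayley_path_len S x y n) with
  | left H => ex_minn (cayley_ex_asbool H)
  | right _ => 0%N
  end.

Definition growth (S : seq G) (r : nat) : nat :=
  #|` fset_set [set g : G | (wdist S 1%g g <= r)%N] |%fset.

Variable R : realType.

(* exponential growth: r |-> |B(e,r)| is equivalent to r |-> exp r *)
Definition exp_growth (S : seq G) : Prop :=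
  exists D : nat, forall r : nat,
    ((growth S r)%:R <= D%:R * expR (D%:R * r%:R) :> R) /\
    (expR r%:R <= D%:R * (growth S (D * r))%:R :> R).

Definition ecard (T : choiceType) (A : set T) : \bar R :=
  if pselect (finite_set A) then ((#|` fset_set A|%fset)%:R)%:E else +oo%E.

Definition dpath (S : seq G) (n : nat) (delta : R) (x0 : G)
    (p : {ffun 'I_n.+1 -> G}) : Prop :=
  p ord0 = x0 /\
  forall i : 'I_n, ((wdist S (p (widen_ord (leqnSn n) i)) (p (lift ord0 i)))%:R <= delta).

Definition pdist (S : seq G) (n : nat) (p q : {ffun 'I_n.+1 -> G}) : nat :=
  \max_(i < n.+1) wdist S (p i) (q i).

Definition separated (S : seq G) (n : nat) (Rad : R)
    (P : set {ffun 'I_n.+1 -> G}) : Prop :=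
  forall p q, P p -> P q -> p <> q -> Rad <= (pdist S p q)%:R.

Definition spath (S : seq G) (n : nat) (Rad delta : R) (x0 : G) : \bar R :=
  ereal_sup [set ecard P | P in
    [set P : set {ffun 'I_n.+1 -> G} | P `<=` dpath S delta x0 /\ separated S Rad P]].

Definition hinf (S : seq G) : \bar R :=
  lim ((lim ((limn_esup (fun n : nat =>
                ((n%:R)^-1)%:E * lne (spath S n Rad delta 1%g))%E)
             @[Rad --> +oo]))
       @[delta --> +oo]).

End CoarseEntropy.

(* A delta-path is determined, up to distance [2 k delta], by its increments over
   blocks of [k] steps, and each increment lies in the ball [B(k delta)]; so for
   [R > 2 k delta] we get [s(n, R, delta) <= |B(k delta)|^(n/k)] and the entropy at
   scale [delta] is at most [ln |B(k delta)| / k], which is arbitrarily small when the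
   growth is subexponential.  Conversely, concatenating discretised geodesics towards
   the points of a [t]-separated net [N] of [B(m delta)] yields [|N|^J] pairwise
   [t]-separated delta-paths of length [J m]; so the entropy at scale [delta] is at
   least [ln |N| / m], and exponential growth makes this grow linearly in [delta]. *)

From HB Require Import structures.
From mathcomp Require Import all_boot all_order all_algebra.
From mathcomp Require Import finmap.
From mathcomp Require Import all_classical all_reals all_analysis.
From mathcomp Require Import zify ring lra.

Set Implicit Arguments.
Unset Strict Implicit.
Unset Printing Implicit Defensive.
Import Order.TTheory GRing.Theory Num.Theory.
Local Open Scope classical_set_scope.

Lemma leq_cardfs_in (T U : choiceType) (A : {fset T}) (B : {fset U}) (f : T -> U) :
  {in A &, injective f} -> {in A, forall x, f x \in B} -> (#|` A| <= #|` B|)%N.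
Proof.
move=> /card_in_imfsetP/eqP <- fAB.
by apply: fsubset_leq_card; apply/fsubsetP => _ /imfsetP[x /= xA ->]; exact: fAB.
Qed.

Lemma finite_set_inj_fset (T U : choiceType) (P : set T) (f : T -> U) (Q : {fset U}) :
  {in P &, injective f} -> (forall x, P x -> f x \in Q) ->
  finite_set P /\ (#|` fset_set P| <= #|` Q|)%N.
Proof.
move=> fi fPQ.
have Pfin : finite_set P.
  have [i fi_eq] := Pinj fi.
  have /card_eqPle[_ le_P_img] := card_image i.
  apply: card_le_finite le_P_img _; rewrite -fi_eq.
  by apply: sub_finite_set (finite_fset Q) => _ [x Px <-]; exact: fPQ.
split=> //; apply: (@leq_cardfs_in _ _ _ _ f) => [x y|x].
  by rewrite !in_fset_set //; apply: fi.
by rewrite in_fset_set // inE; apply: fPQ.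
Qed.

Lemma card_imfsetT (T : finType) (U : choiceType) (f : T -> U) :
  injective f -> #|` [fset f x | x : T]%fset| = #|T|.
Proof.
move=> fi; rewrite card_imfset //.
by have := card_finset (T := T) predT; rewrite (card_imfset _ _ (@inj_id T)) => <-.
Qed.

Lemma leq_card_imfsetT (T : finType) (U : choiceType) (f : T -> U) :
  (#|` [fset f x | x : T]%fset| <= #|T|)%N.
Proof.
apply: (leq_trans (leq_imfset_card _ _ _)).
by have := card_finset (T := T) predT; rewrite (card_imfset _ _ (@inj_id T)) => <-.
Qed.

Section WordMetric.
Variables (G : groupType) (S : seq G).
Local Open Scope group_scope.
Local Notation cpath := (cayley_path_len S).

Lemma cayley_edge_sym a b : cayley_edge S a b -> cayley_edge S b a.
Proof. by case=> s sS [] h; exists s => //; [right|left]. Qed.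

Lemma cayley_edge_mull g a b : cayley_edge S a b -> cayley_edge S (g * a) (g * b).
Proof. by case=> s sS [] ->; exists s => //; [left|right]; rewrite mulgA. Qed.

Lemma cayley_path0 x : cpath x x 0.
Proof. by exists (fun _ => x); split. Qed.

Lemma cayley_path_gen x s : s \in S -> cpath x (x * s) 1.
Proof.
move=> sS; exists (fun i => if i is 0%N then x else x * s); split => //.
by case=> // _; exists s => //; left.
Qed.

Lemma cayley_path_cat x y z a b : cpath x y a -> cpath y z b -> cpath x z (a + b).
Proof.
case=> p [p0 pa pe] [q [q0 qb qe]].
exists (fun i => if (i <= a)%N then p i else q (i - a)%N); split.
- by rewrite leq0n.
- case: (leqP (a + b) a) => [ab|]; last by rewrite addKn.
  have b0 : b = 0%N by lia.
  by rewrite b0 addn0 pa -qb b0 q0.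
move=> i ilt; case: (ltnP i a) => ia; first by rewrite (ltnW ia); apply: pe.
case: (leqP i a) => ia'.
  have -> : i = a by apply/eqP; rewrite eqn_leq ia ia'.
  by rewrite pa -q0 subSn // subnn; apply: qe; lia.
by rewrite subSn 1?ltnW //; apply: qe; lia.
Qed.

Lemma cayley_path_rev x y a : cpath x y a -> cpath y x a.
Proof.
case=> p [p0 pa pe]; exists (fun i => p (a - i)%N); split.
- by rewrite subn0.
- by rewrite subnn.
move=> i ia; apply: cayley_edge_sym.
have -> : (a - i = (a - i.+1).+1)%N by lia.
by apply: pe; lia.
Qed.

Lemma cayley_path_mull g x y a : cpath x y a -> cpath (g * x) (g * y) a.
Proof.
case=> p [p0 pa pe]; exists (fun i => g * p i); split; first by rewrite p0.
  by rewrite pa.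
by move=> i ia; apply: cayley_edge_mull; apply: pe.
Qed.

Lemma cayley_path_sub p a i j : (forall k, (k < a)%N -> cayley_edge S (p k) (p k.+1)) ->
  (i <= j <= a)%N -> cpath (p i) (p j) (j - i).
Proof.
move=> pe /andP[ij ja]; exists (fun k => p (i + k)%N); split.
- by rewrite addn0.
- by rewrite subnKC.
by move=> k kl; rewrite addnS; apply: pe; lia.
Qed.

Lemma wdist_min x y n : cpath x y n -> (wdist S x y <= n)%N.
Proof.
move=> hn; rewrite /wdist; case: pselect => [H|[]]; last by exists n.
by case: ex_minnP => m _ hmin; apply: hmin; apply/asboolP.
Qed.

Lemma wdistxx x : wdist S x x = 0%N.
Proof. by apply/eqP; rewrite -leqn0; apply/wdist_min/cayley_path0. Qed.

Hypothesis genS : generates S.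

Lemma cayley_path_exists x y : exists n, cpath x y n.
Proof.
suff from1 g : exists n, cpath 1 g n.
  have [n hn] := from1 (x^-1 * y); exists n.
  by have := cayley_path_mull x hn; rewrite mulg1 mulVKg.
apply: (genS (H := fun g => exists n, cpath 1 g n)).
- by exists 0%N; apply: cayley_path0.
- move=> u v [a ha] [b hb]; exists (a + b)%N; apply: cayley_path_cat ha _.
  by have := cayley_path_mull u hb; rewrite mulg1.
- move=> u [a ha]; exists a; apply: cayley_path_rev.
  by have := cayley_path_mull u^-1 ha; rewrite mulg1 mulVg.
- by move=> s sS; exists 1%N; have := cayley_path_gen 1 sS; rewrite mul1g.
Qed.

Lemma wdist_path x y : cpath x y (wdist S x y).
Proof.
rewrite /wdist; case: pselect => [H|[]]; last exact: cayley_path_exists.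
by case: ex_minnP => m /asboolP.
Qed.

Lemma wdist_eq0 x y : wdist S x y = 0%N -> x = y.
Proof. by move=> h; have := wdist_path x y; rewrite h => -[p [<- <- _]]. Qed.

Lemma wdist_triangle x y z : (wdist S x z <= wdist S x y + wdist S y z)%N.
Proof. by apply/wdist_min/cayley_path_cat; apply: wdist_path. Qed.

Lemma wdistC x y : wdist S x y = wdist S y x.
Proof.
by apply/eqP; rewrite eqn_leq !wdist_min //; apply/cayley_path_rev/wdist_path.
Qed.

Lemma wdist_mull g x y : wdist S (g * x) (g * y) = wdist S x y.
Proof.
apply/eqP; rewrite eqn_leq; apply/andP; split; apply: wdist_min.
  by apply: cayley_path_mull; apply: wdist_path.
by have := cayley_path_mull g^-1 (wdist_path (g * x) (g * y)); rewrite !mulKg.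
Qed.

Lemma wdist_geodesic c : exists p : nat -> G,
  [/\ p 0%N = 1, p (wdist S 1 c) = c &
      forall i j, (i <= j <= wdist S 1 c)%N -> (wdist S (p i) (p j) <= j - i)%N].
Proof.
have [p [p0 pa pe]] := wdist_path 1 c; exists p; split => // i j hij.
exact/wdist_min/(cayley_path_sub pe hij).
Qed.

End WordMetric.

Section Balls.
Variables (G : groupType) (S : seq G).
Hypothesis genS : generates S.
Local Open Scope group_scope.

Definition wball (x : G) (r : nat) : set G := [set g | (wdist S x g <= r)%N].

Definition sym_gens : seq G := 1 :: S ++ map (fun s => s^-1) S.

Fixpoint words (r : nat) : seq G :=
  if r is r'.+1 then [seq x * y | x <- words r', y <- sym_gens] else [:: 1].

Lemma size_words r : size (words r) = (size sym_gens ^ r)%N.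
Proof. by elim: r => // r IH; rewrite size_allpairs IH expnS mulnC. Qed.

Lemma mem_words r g : (wdist S 1 g <= r)%N -> g \in words r.
Proof.
elim: r g => [|r IH] g hg.
  by rewrite -(wdist_eq0 genS (_ : wdist S 1 g = 0%N)) ?mem_seq1 //; apply/eqP; rewrite -leqn0.
case: (leqP (wdist S 1 g) r) => h.
  rewrite -(mulg1 g); apply/allpairsP; exists (g, 1) => /=.
  by rewrite IH // mem_head.
have [p [p0 pg pe]] := wdist_path genS 1 g.
have dg : wdist S 1 g = r.+1 by apply/eqP; rewrite eqn_leq hg h.
rewrite dg in pg pe.
have hr : (wdist S 1 (p r) <= r)%N.
  have := wdist_min (cayley_path_sub (i := 0) (j := r) pe (leqnSn r)).
  by rewrite p0 subn0.
have [s sS [e|e]] := pe r (ltnSn r); rewrite pg in e; apply/allpairsP.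
  by exists (p r, s); rewrite IH //= inE mem_cat sS orbT.
by exists (p r, s^-1); rewrite IH //= inE mem_cat map_f ?orbT // e mulgK.
Qed.

Lemma wball_finite x r : finite_set (wball x r).
Proof.
apply: (@sub_finite_set _ _ ((fun g => x * g) @` [set` seq_fset tt (words r)])).
  move=> g hg; exists (x^-1 * g); last by rewrite mulVKg.
  suff : x^-1 * g \in seq_fset tt (words r) by [].
  rewrite seq_fsetE; apply: mem_words.
  by rewrite -(wdist_mull genS x) mulg1 mulVKg.
by apply: finite_image; apply: finite_fset.
Qed.

Lemma card_wball x r : #|` fset_set (wball x r)| = growth S r.
Proof.
have translate y c : {in fset_set (wball c r), forall g, y * g \in fset_set (wball (y * c) r)}.
  by move=> g; rewrite !in_fset_set ?inE /wball //= ?(wdist_mull genS) //; apply: wball_finite.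
apply/eqP; rewrite eqn_leq; apply/andP; split.
  apply: (@leq_cardfs_in _ _ _ _ (fun g => x^-1 * g)); first by move=> a b _ _; apply: mulgI.
  by have := translate x^-1 x; rewrite mulVg.
apply: (@leq_cardfs_in _ _ _ _ (fun g => x * g)); first by move=> a b _ _; apply: mulgI.
by have := translate x 1; rewrite mulg1.
Qed.

Lemma growth_le_expn r : (growth S r <= size sym_gens ^ r)%N.
Proof.
rewrite -size_words; apply: (@leq_trans #|` seq_fset tt (words r)|); last first.
  by rewrite size_seq_fset size_undup.
apply: fsubset_leq_card; apply/fsubsetP => g.
rewrite in_fset_set; last exact: (wball_finite 1 r).
by rewrite inE seq_fsetE; apply: mem_words.
Qed.

Lemma growth_gt0 r : (0 < growth S r)%N.
Proof.
rewrite -(card_wball 1) cardfs_gt0; apply/eqP => h.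
have : (1 : G) \in fset_set (wball 1 r).
  rewrite in_fset_set; last exact: wball_finite.
  by rewrite inE /wball /= wdistxx.
by rewrite h inE.
Qed.

(* Greedy choice: each point of the net accounts for at most the [t]-ball around it. *)
Lemma separated_net_exists t (A : {fset G}) : exists N : {fset G},
  [/\ (N `<=` A)%fset,
      forall x y, x \in N -> y \in N -> x != y -> (t < wdist S x y)%N &
      (#|` A| <= #|` N| * growth S t)%N].
Proof.
move: {2}#|` A| (leqnn #|` A|) => n; elim: n A => [|n IH] A hA.
  exists fset0; split; [exact: fsub0set | by move=> x y; rewrite inE | ].
  by move: hA; rewrite leqn0 => /eqP ->.
have [A0|[a aA]] := fset_0Vmem A.
  by exists fset0; split; [exact: fsub0set | move=> x y; rewrite inE | rewrite A0].
pose A' := [fset y in A | (t < wdist S a y)%N]%fset.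
have aA' : a \notin A' by rewrite !inE wdistxx andbF.
have A'A : (A' `<=` A)%fset by apply/fsubsetP => y; rewrite !inE => /andP[].
have hA' : (#|` A'| <= n)%N.
  rewrite -ltnS (leq_trans _ hA) // (cardfsD1 a A) aA add1n ltnS.
  apply: fsubset_leq_card; apply/fsubsetP => y yA'.
  by rewrite !inE (fsubsetP A'A _ yA') andbT; apply: contraNneq aA' => <-.
have [N' [N'A' N'sep N'card]] := IH A' hA'.
have aN' : a \notin N' by apply: contra aA' => /(fsubsetP N'A').
exists (a |` N')%fset; split.
- apply/fsubsetP => y; rewrite !inE => /orP[/eqP ->//|yN'].
  exact: (fsubsetP A'A _ (fsubsetP N'A' _ yN')).
- move=> x y; rewrite !inE => /orP[/eqP ->|xN'] /orP[/eqP ->|yN'] xy.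
  + by rewrite eqxx in xy.
  + by have := fsubsetP N'A' _ yN'; rewrite !inE => /andP[].
  + by have := fsubsetP N'A' _ xN'; rewrite !inE (wdistC genS) => /andP[].
  + exact: N'sep.
rewrite cardfsU1 aN' add1n mulSn.
pose B := [fset y in A | (wdist S a y <= t)%N]%fset.
have AU : (A `<=` A' `|` B)%fset.
  by apply/fsubsetP => y yA; rewrite !inE yA /=; case: leqP.
apply: (leq_trans (fsubset_leq_card AU)); rewrite addnC.
apply: (leq_trans (leq_card_fsetU _ _)); apply: leq_add => //.
rewrite -(card_wball a t); apply: (@leq_cardfs_in _ _ _ _ id) => // y.
by rewrite !inE => /andP[_ h]; rewrite in_fset_set ?inE //; exact: wball_finite.
Qed.

End Balls.

Lemma ecard_finite (R : realType) (T : choiceType) (A : set T) : finite_set A ->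
  ecard R A = (#|` fset_set A|%:R)%:E.
Proof. by rewrite /ecard; case: pselect. Qed.

Fixpoint prefix_prod (G : groupType) (c : nat -> G) (j : nat) : G :=
  if j is j'.+1 then (prefix_prod c j' * c j')%g else 1%g.

Section DeltaPaths.
Variables (G : groupType) (S : seq G) (R : realType).
Hypothesis genS : generates S.
Local Open Scope group_scope.

(* [pnth p i] reads the path with a [nat] index; it is junk for [i > n]. *)
Definition pnth n (p : {ffun 'I_n.+1 -> G}) (i : nat) : G := p (inord i).

Lemma pnthE n (p : {ffun 'I_n.+1 -> G}) (i : 'I_n.+1) : p i = pnth p i.
Proof. by rewrite /pnth inord_val. Qed.

Lemma pdistxx n (p : {ffun 'I_n.+1 -> G}) : pdist S p p = 0%N.
Proof. by apply/eqP; rewrite -leqn0; apply/bigmax_leqP => i _; rewrite wdistxx. Qed.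

Section OneDeltaPath.
Variables (n : nat) (delta : R) (x0 : G) (p : {ffun 'I_n.+1 -> G}).
Hypothesis dp : dpath S delta x0 p.

Lemma dpath_pnth0 : pnth p 0 = x0.
Proof. by case: dp => <- _; congr (p _); apply: val_inj; rewrite /= inordK. Qed.

Lemma dpath_step i : (i < n)%N -> (wdist S (pnth p i) (pnth p i.+1) <= Num.truncn delta)%N.
Proof.
case: dp => _ h hi; have := h (Ordinal hi).
have -> : widen_ord (leqnSn n) (Ordinal hi) = inord i.
  by apply: val_inj; rewrite /= inordK // ltnW.
have -> : lift ord0 (Ordinal hi) = inord i.+1 by apply: val_inj; rewrite /= inordK.
by move=> hd; rewrite truncn_ge_nat // (le_trans _ hd) ?ler0n.
Qed.

Lemma dpath_chain a b : (a <= b <= n)%N ->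
  (wdist S (pnth p a) (pnth p b) <= (b - a) * Num.truncn delta)%N.
Proof.
move=> /andP[]; elim: b => [|b IH] ab bn.
  by move: ab; rewrite leqn0 => /eqP ->; rewrite wdistxx.
case: (leqP a b) => h; last first.
  have -> : a = b.+1 by apply/eqP; rewrite eqn_leq ab h.
  by rewrite wdistxx.
apply: (leq_trans (wdist_triangle genS _ (pnth p b) _)).
have := IH h (ltnW bn); have := dpath_step bn.
rewrite subSn // mulSn; lia.
Qed.

End OneDeltaPath.

Definition block_steps n kb (p : {ffun 'I_n.+1 -> G}) : {ffun 'I_(n %/ kb) -> G} :=
  [ffun j : 'I_(n %/ kb) => (pnth p (j * kb))^-1 * pnth p (j.+1 * kb)].

Lemma block_end_le n kb (j : 'I_(n %/ kb)) : (j.+1 * kb <= n)%N.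
Proof.
case: kb j => [|kb] j; first by case: j; rewrite divn0.
by rewrite -leq_divRL.
Qed.

Lemma block_steps_wball n kb (delta : R) x0 (p : {ffun 'I_n.+1 -> G}) (j : 'I_(n %/ kb)) :
  dpath S delta x0 p -> wball S 1 (kb * Num.truncn delta) (block_steps kb p j).
Proof.
move=> dp; rewrite /wball /= ffunE -(wdist_mull genS (pnth p (j * kb))) mulg1 mulVKg.
have hjk : (j * kb <= j.+1 * kb <= n)%N by rewrite block_end_le leq_mul2r leqnSn orbT.
by have := dpath_chain dp hjk; rewrite mulSn addnK.
Qed.

Lemma pdist_le_block_steps n kb (delta : R) x0 (p q : {ffun 'I_n.+1 -> G}) :
  (0 < kb)%N -> dpath S delta x0 p -> dpath S delta x0 q ->
  block_steps kb p = block_steps kb q -> (pdist S p q <= 2 * kb * Num.truncn delta)%N.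
Proof.
move=> kb0 dp dq epq.
have eq_blocks j : (j <= n %/ kb)%N -> pnth p (j * kb) = pnth q (j * kb).
  elim: j => [|j IH] hj; first by rewrite !mul0n (dpath_pnth0 dp) (dpath_pnth0 dq).
  have := congr1 (fun f : {ffun _ -> G} => f (Ordinal hj)) epq.
  by rewrite !ffunE /= (IH (ltnW hj)) => /mulgI.
apply/bigmax_leqP => i _; rewrite !pnthE.
set a := (i %/ kb * kb)%N.
have ai : (a <= i)%N by rewrite /a leq_trunc_div.
have ia : (i - a < kb)%N by rewrite /a {1}(divn_eq i kb) addKn ltn_mod.
have iN : (i <= n)%N by rewrite -ltnS ltn_ord.
have pa_qa : pnth p a = pnth q a by apply: eq_blocks; rewrite leq_div2r.
have aiN : (a <= i <= n)%N by rewrite ai iN.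
have := dpath_chain dp aiN; have := dpath_chain dq aiN.
have := wdist_triangle genS (pnth p i) (pnth p a) (pnth q i).
rewrite (wdistC genS (pnth p i) (pnth p a)) pa_qa.
have : ((i - a) * Num.truncn delta <= kb * Num.truncn delta)%N by rewrite leq_mul2r ltnW ?orbT.
lia.
Qed.

Lemma spath_le_growth_pow n (Rad delta : R) kb : (0 < kb)%N ->
  ((2 * kb * Num.truncn delta)%:R < Rad)%R ->
  (spath S n Rad delta 1 <= ((growth S (kb * Num.truncn delta) ^ (n %/ kb))%N%:R)%:E)%E.
Proof.
move=> kb0 hRad; apply: ge_ereal_sup => _ [P [Psub Psep] <-].
set B := fset_set (wball S 1 (kb * Num.truncn delta)).
have Bfin : finite_set (wball S 1 (kb * Num.truncn delta)) := wball_finite genS 1 _.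
have B1 : (1 : G) \in B by rewrite in_fset_set // inE /wball /= wdistxx.
pose val_ffun (f : {ffun 'I_(n %/ kb) -> B}) : {ffun 'I_(n %/ kb) -> G} :=
  [ffun j => val (f j)].
pose Q := [fset val_ffun f | f : {ffun 'I_(n %/ kb) -> B}]%fset.
have [Pfin cardP] : finite_set P /\ (#|` fset_set P| <= #|` Q|)%N.
  apply: (finite_set_inj_fset (f := block_steps kb)) => [p q|p Pp].
    rewrite !inE => Pp Pq epq; apply: contrapT => neq.
    have := Psep p q Pp Pq neq; apply/negP; rewrite -ltNge.
    apply: le_lt_trans hRad; rewrite ler_nat.
    exact: pdist_le_block_steps (Psub p Pp) (Psub q Pq) _.
  apply/imfsetP; exists [ffun j => insubd [` B1]%fset (block_steps kb p j)] => //.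
  apply/ffunP => j; rewrite /val_ffun [RHS]ffunE [in RHS]ffunE insubdK //.
  by rewrite in_fset_set // inE; apply: block_steps_wball (Psub p Pp).
rewrite ecard_finite // lee_fin ler_nat.
apply: (leq_trans cardP); apply: (leq_trans (leq_card_imfsetT _)).
by rewrite card_ffun card_ord -cardfE card_wball.
Qed.

Lemma spath_ge0 n (Rad delta : R) : (0 <= spath S n Rad delta 1)%E.
Proof.
apply: ereal_sup_ubound; exists set0; first by split=> // p q.
by rewrite ecard_finite ?fset_set0 ?cardfs0.
Qed.

Lemma spath_ge1 n (Rad delta : R) : (0 <= delta)%R -> (1 <= spath S n Rad delta 1)%E.
Proof.
move=> d0; pose p : {ffun 'I_n.+1 -> G} := [ffun=> 1].
apply: ereal_sup_ubound; exists [set p].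
  split; last by move=> x y -> ->.
  by move=> _ ->; split=> [|i]; rewrite !ffunE // wdistxx.
by rewrite ecard_finite ?fset_set1 ?cardfs1 //; exact: finite_set1.
Qed.

Section NetPaths.
Variables (dn m t J : nat) (N : {fset G}).
Hypothesis m_gt0 : (0 < m)%N.
Hypothesis N_ball : forall x, x \in N -> (wdist S 1 x <= m * dn)%N.
Hypothesis N_sep : forall x y, x \in N -> y \in N -> x != y -> (t < wdist S x y)%N.

Definition geod (c : G) : nat -> G := projT1 (cid (wdist_geodesic genS c)).

Lemma geodP c : [/\ geod c 0 = 1, geod c (wdist S 1 c) = c &
  forall i j, (i <= j <= wdist S 1 c)%N -> (wdist S (geod c i) (geod c j) <= j - i)%N].
Proof. by rewrite /geod; case: cid. Qed.

Definition geod_at (c : G) (k : nat) : G := geod c (minn (k * dn) (wdist S 1 c)).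

Lemma geod_at0 c : geod_at c 0 = 1.
Proof. by rewrite /geod_at mul0n min0n; case: (geodP c). Qed.

Lemma geod_at_end c : (wdist S 1 c <= m * dn)%N -> geod_at c m = c.
Proof. by move=> h; rewrite /geod_at (minn_idPr h); case: (geodP c). Qed.

Lemma geod_at_step c k : (wdist S (geod_at c k) (geod_at c k.+1) <= dn)%N.
Proof.
case: (geodP c) => _ _ h; rewrite /geod_at.
have k_le : (k * dn <= k.+1 * dn)%N by rewrite leq_mul2r leqnSn orbT.
have hh : (minn (k * dn) (wdist S 1 c) <= minn (k.+1 * dn) (wdist S 1 c) <= wdist S 1 c)%N.
  by rewrite geq_minr andbT; lia.
by apply: (leq_trans (h _ _ hh)); rewrite mulSn; lia.
Qed.

Local Notation word := {ffun 'I_J -> N}.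

Definition letter (f : word) (j : nat) : G := if insub j is Some k then val (f k) else 1.

Lemma letterE (f : word) (k : 'I_J) : letter f k = val (f k).
Proof. by rewrite /letter valK. Qed.

Lemma letter_ball (f : word) j : (wdist S 1 (letter f j) <= m * dn)%N.
Proof.
rewrite /letter; case: insubP => [k _ _|_]; last by rewrite wdistxx.
exact/N_ball/fsvalP.
Qed.

Definition concat_point (f : word) (i : nat) : G :=
  prefix_prod (letter f) (i %/ m) * geod_at (letter f (i %/ m)) (i %% m).

Lemma concat_point_block f j : concat_point f (j * m) = prefix_prod (letter f) j.
Proof. by rewrite /concat_point mulnK // modnMl geod_at0 mulg1. Qed.

Lemma concat_point_step f i : (wdist S (concat_point f i) (concat_point f i.+1) <= dn)%N.
Proof.
set q := (i %/ m)%N; set r := (i %% m)%N.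
have ei : i = (q * m + r)%N by rewrite /q /r -divn_eq.
have rm : (r < m)%N by rewrite /r ltn_mod.
case: (ltnP r.+1 m) => h.
  have e1 : (i.+1 %/ m)%N = q by rewrite ei -addnS divnMDl // divn_small // addn0.
  have e2 : (i.+1 %% m)%N = r.+1 by rewrite ei -addnS modnMDl modn_small.
  by rewrite /concat_point e1 e2 -/q -/r (wdist_mull genS); apply: geod_at_step.
have rm1 : r.+1 = m by apply/eqP; rewrite eqn_leq rm h.
have -> : i.+1 = (q.+1 * m)%N by rewrite ei -addnS rm1 mulSn addnC.
rewrite concat_point_block /= /concat_point -/q -/r (wdist_mull genS).
by rewrite -{2}(geod_at_end (letter_ball f q)) -rm1; apply: geod_at_step.
Qed.

Definition net_path (f : word) : {ffun 'I_(J * m).+1 -> G} :=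
  [ffun i : 'I_(J * m).+1 => concat_point f i].

Lemma net_path_dpath (delta : R) f : (dn%:R <= delta)%R -> dpath S delta 1 (net_path f).
Proof.
move=> dn_delta; split=> [|i]; first by rewrite ffunE /concat_point div0n mod0n geod_at0 mulg1.
by rewrite !ffunE; apply: le_trans dn_delta; rewrite ler_nat concat_point_step.
Qed.

(* Net paths of different words part at the first differing letter, at a net point. *)
Lemma net_path_sep f g : f != g -> (t < pdist S (net_path f) (net_path g))%N.
Proof.
move=> fg.
have [k hk] : exists k : 'I_J, f k != g k.
  apply/existsP; move: fg; apply: contraR; rewrite negb_exists => /forallP h.
  by apply/eqP/ffunP => k; have := h k; rewrite negbK => /eqP.
have ex : exists j, letter f j != letter g j.
  by exists (val k); rewrite !letterE; apply: contra hk => /eqP/val_inj ->.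
have [j hj hmin] := ex_minnP ex.
have jJ : (j < J)%N.
  rewrite ltnNge; apply/negP => h; move: hj.
  by rewrite /letter !insubF ?eqxx //; apply/negbTE; rewrite -leqNgt.
have pre i : (i <= j)%N -> prefix_prod (letter f) i = prefix_prod (letter g) i.
  elim: i => [|i IH] hi //=; rewrite IH ?(ltnW hi) //.
  by congr (_ * _); apply/eqP; apply: contraT => /hmin; rewrite leqNgt hi.
have I1 : (j.+1 * m <= J * m)%N by rewrite leq_mul2r jJ orbT.
apply: (leq_trans _ (leq_bigmax (inord (j.+1 * m)))).
rewrite /= !ffunE /= inordK ?ltnS // !concat_point_block /= pre // (wdist_mull genS).
move: hj; rewrite -[j]/(val (Ordinal jJ)) !letterE => hj.
exact: N_sep (fsvalP _) (fsvalP _) hj.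
Qed.

Lemma net_path_inj : injective net_path.
Proof.
move=> f g e; apply/eqP; apply: contraT => /net_path_sep.
by rewrite e pdistxx.
Qed.

End NetPaths.

Lemma spath_ge_card_pow (Rad delta : R) (dn m t J : nat) (N : {fset G}) :
  (0 < m)%N ->
  (forall x, x \in N -> (wdist S 1 x <= m * dn)%N) ->
  (forall x y, x \in N -> y \in N -> x != y -> (t < wdist S x y)%N) ->
  (dn%:R <= delta)%R -> (Rad <= t.+1%:R)%R ->
  ((#|` N| ^ J)%N%:R%:E <= spath S (J * m) Rad delta 1)%E.
Proof.
move=> m_gt0 N_ball N_sep dn_delta Rad_le.
pose P (f : {ffun 'I_J -> N}) := net_path dn m f.
apply: ereal_sup_ubound; exists (range P).
  split=> [_ [f _ <-]|_ _ [f _ <-] [g _ <-] fg]; first exact: net_path_dpath.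
  apply: le_trans Rad_le _; rewrite ler_nat; apply: net_path_sep => //.
  by apply: contra_not_neq fg => ->.
have fin : finite_set (range P) by apply: finite_image; exact: finite_finset.
rewrite ecard_finite //.
have -> : fset_set (range P) = [fset P f | f : {ffun 'I_J -> N}]%fset.
  apply/fsetP => x; rewrite in_fset_set //.
  apply/idP/imfsetP => [/set_mem [f _ <-]|[f _ ->]]; first by exists f.
  by apply/mem_set; exists f.
rewrite card_imfsetT; last exact: net_path_inj m_gt0 N_sep.
by rewrite card_ffun card_ord -cardfE.
Qed.

End DeltaPaths.

Section LimSup.
Variable R : realType.
Local Open Scope ereal_scope.
Implicit Types (u v : (\bar R)^nat) (c : \bar R).

Lemma le_limn_esup u v : (forall n, u n <= v n) -> limn_esup u <= limn_esup v.
Proof.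
move=> uv; rewrite !limn_esup_lim; apply: lee_lim; try exact: is_cvg_esups.
apply: nearW => n; apply: ge_ereal_sup => _ [k /= nk <-].
by apply: le_trans (uv k) _; apply: ereal_sup_ubound; exists k.
Qed.

Lemma limn_esup_le u c : (forall n, u n <= c) -> limn_esup u <= c.
Proof.
move=> uc; rewrite limn_esup_lim; apply: lime_le; first exact: is_cvg_esups.
by apply: nearW => n; apply: ge_ereal_sup => _ [k /= nk <-].
Qed.

Lemma limn_esup_ge u c : (forall n, exists2 k, (n <= k)%N & c <= u k) -> c <= limn_esup u.
Proof.
move=> cu; rewrite limn_esup_lim; apply: lime_ge; first exact: is_cvg_esups.
apply: nearW => n; have [k nk ck] := cu n.
by apply: le_trans ck _; apply: ereal_sup_ubound; exists k.
Qed.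

End LimSup.

Section CoarseEntropy.
Variables (G : groupType) (S : seq G) (R : realType).
Hypothesis genS : generates S.
Local Open Scope ereal_scope.

Definition sep_rate (Rad delta : R) (n : nat) : \bar R :=
  ((n%:R)^-1)%:E * lne (spath S n Rad delta 1%g).

Definition entropy_dR (delta Rad : R) : \bar R := limn_esup (sep_rate Rad delta).

Definition entropy_d (delta : R) : \bar R := lim (entropy_dR delta Rad @[Rad --> +oo%R]).

Lemma hinfE : hinf R S = lim (entropy_d delta @[delta --> +oo%R]).
Proof. by []. Qed.

Lemma entropy_dR_nonincreasing delta :
  {homo entropy_dR delta : Rad Rad' / (Rad <= Rad')%R >-> Rad' <= Rad}.
Proof.
move=> Rad Rad' le_Rad; apply: le_limn_esup => n.
apply: lee_wpmul2l; first by rewrite lee_fin invr_ge0 ler0n.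
rewrite lee_lne ?in_itv /= ?leey ?spath_ge0 //.
apply: ereal_sup_le => _ [P [Psub Psep] <-]; exists P => //; split=> // p q Pp Pq pq.
exact: le_trans le_Rad (Psep p q Pp Pq pq).
Qed.

Lemma entropy_dE delta : entropy_d delta = ereal_inf (range (entropy_dR delta)).
Proof. by apply/cvg_lim/nonincreasing_cvge/entropy_dR_nonincreasing. Qed.

Lemma entropy_d_ge0 (delta : R) : (0 <= delta)%R -> 0 <= entropy_d delta.
Proof.
move=> d0; rewrite entropy_dE; apply: le_ereal_inf_tmp => _ [Rad _ <-].
apply: limn_esup_ge => n; exists n => //; apply: mule_ge0.
  by rewrite lee_fin invr_ge0 ler0n.
by rewrite lne_ge0 spath_ge1.
Qed.

Lemma lne_spath_le n (Rad delta : R) (b k : nat) : (0 < b)%N ->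
  spath S n Rad delta 1%g <= (b ^ k)%N%:R%:E ->
  lne (spath S n Rad delta 1%g) <= (k%:R * ln (b%:R : R))%:E.
Proof.
move=> b0 sp_le; rewrite mulr_natl -lnXn ?ltr0n // -natrX -lne_EFin ?ltr0n ?expn_gt0 ?b0 //.
by rewrite lee_lne ?in_itv /= ?leey ?spath_ge0 ?lee_fin ?ler0n.
Qed.

Lemma lne_spath_ge n (Rad delta : R) (b k : nat) : (0 < b)%N ->
  (b ^ k)%N%:R%:E <= spath S n Rad delta 1%g ->
  (k%:R * ln (b%:R : R))%:E <= lne (spath S n Rad delta 1%g).
Proof.
move=> b0 sp_ge; rewrite mulr_natl -lnXn ?ltr0n // -natrX -lne_EFin ?ltr0n ?expn_gt0 ?b0 //.
by rewrite lee_lne ?in_itv /= ?leey ?spath_ge0 ?lee_fin ?ler0n.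
Qed.

Lemma entropy_dR_le_ln_growth (delta Rad : R) kb : (0 < kb)%N ->
  ((2 * kb * Num.truncn delta)%:R < Rad)%R ->
  entropy_dR delta Rad <= (kb%:R^-1 * ln (growth S (kb * Num.truncn delta))%:R)%:E.
Proof.
move=> kb0 hRad; set g := growth S _.
have g0 : (0 < g)%N by apply: growth_gt0.
have ln_g0 : (0 <= ln (g%:R : R))%R by rewrite ln_ge0 ?ler1n.
apply: limn_esup_le => -[|n].
  by rewrite /sep_rate invr0 mul0e lee_fin mulr_ge0 ?invr_ge0.
have hL := lne_spath_le g0 (spath_le_growth_pow genS n.+1 kb0 hRad).
apply: le_trans (lee_wpmul2l _ hL) _; first by rewrite lee_fin invr_ge0 ler0n.
rewrite -EFinM lee_fin mulrA ler_wpM2r //.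
rewrite mulrC ler_pdivrMr ?ltr0n // mulrC ler_pdivlMr ?ltr0n //.
by rewrite -natrM ler_nat leq_trunc_div.
Qed.

Lemma entropy_dR_ge_ln_net (delta Rad : R) dn m t (N : {fset G}) :
  (0 < m)%N ->
  (forall x, x \in N -> (wdist S 1 x <= m * dn)%N) ->
  (forall x y, x \in N -> y \in N -> x != y -> (t < wdist S x y)%N) ->
  (dn%:R <= delta)%R -> (Rad <= t.+1%:R)%R -> (0 < #|` N|)%N ->
  (m%:R^-1 * ln (#|` N|%:R : R))%:E <= entropy_dR delta Rad.
Proof.
move=> m0 N_ball N_sep dn_delta Rad_le N0.
apply: limn_esup_ge => n; exists (n.+1 * m)%N.
  by apply: leq_trans (leqnSn n) _; rewrite leq_pmulr.
have hL := lne_spath_ge N0 (spath_ge_card_pow genS n.+1 m0 N_ball N_sep dn_delta Rad_le).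
apply: le_trans (lee_wpmul2l _ hL); last by rewrite lee_fin invr_ge0 ler0n.
rewrite -EFinM lee_fin le_eqVlt; apply/orP; left; apply/eqP.
by rewrite natrM; field; rewrite pnatr_eq0 -lt0n m0 /= nat1r.
Qed.

End CoarseEntropy.

Local Open Scope ring_scope.

Lemma ln_lt_of_mul_lt_expR (R : realType) (D g x : R) : 1 <= D -> 0 < g ->
  D * g < expR x -> ln g < x.
Proof.
move=> D1 g0 lt_exp; have D0 : 0 < D by apply: lt_le_trans D1.
have le_lnDg : ln g <= ln (D * g) by rewrite ler_ln ?posrE ?mulr_gt0 // ler_peMl // ltW.
by apply: le_lt_trans le_lnDg _; rewrite -[ltRHS]expRK ltr_ln ?posrE ?mulr_gt0 ?expR_gt0.
Qed.

Lemma ln_ge_of_expR_le (R : realType) (D a k b x y : R) : 0 < D -> 0 < k -> 0 < b ->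
  expR x <= D * a -> a <= k * b -> ln D + ln b <= y -> x - y <= ln k.
Proof.
move=> D0 k0 b0 x_le a_le y_ge.
have : x <= ln D + ln k + ln b.
  rewrite -!lnM ?posrE ?mulr_gt0 // -[leLHS]expRK ler_ln ?posrE ?expR_gt0 ?mulr_gt0 //.
  by apply: le_trans x_le _; rewrite -mulrA ler_pM2l.
lra.
Qed.

Section Dichotomy.
Variables (G : groupType) (S : seq G) (R : realType).
Hypothesis genS : generates S.

Lemma growth_le_expR (D r : nat) : (size (sym_gens S) <= D)%N ->
  (growth S r)%:R <= D%:R * expR (D%:R * r%:R) :> R.
Proof.
move=> gens_le; have D1 : (1 <= D)%N by apply: leq_trans gens_le.
apply: (@le_trans _ _ ((D ^ r)%:R)).
  rewrite ler_nat (leq_trans (growth_le_expn genS r)) //.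
  by case: r => // r; rewrite leq_exp2r.
have le_pow : (D%:R : R) ^+ r <= expR D%:R ^+ r.
  apply: lerXn2r; rewrite ?nnegrE ?ler0n ?expR_ge0 //.
  by apply: le_trans (expR_ge1Dx _); rewrite lerDr.
rewrite natrX; apply: le_trans le_pow _; rewrite -expRM_natr -[leLHS]mul1r.
by apply: ler_pM; rewrite ?ler1n ?expR_ge0.
Qed.

Lemma subexp_growth_small_ball : ~ exp_growth R S -> forall D : nat,
  (size (sym_gens S) <= D)%N ->
  exists2 r : nat, (0 < r)%N & D%:R * (growth S (D * r))%:R < expR r%:R :> R.
Proof.
move=> nexp D gens_le; apply: contrapT => no_r; apply: nexp; exists D => r.
split; first exact: growth_le_expR.
case: r => [|r].
  rewrite expR0 muln0 -natrM ler1n muln_gt0 growth_gt0 // andbT.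
  exact: leq_trans gens_le.
by rewrite leNgt; apply/negP => lt_exp; apply: no_r; exists r.+1.
Qed.

(* Pick [E > 1/e] and [r] with [E dn |B(E dn r)| < e^r]; blocks of [E r] steps then
   have entropy at most [ln |B(E dn r)| / (E r) < 1/E]. *)
Lemma entropy_d_subexp : ~ exp_growth R S ->
  forall delta : R, 1 <= delta -> entropy_d S delta = 0%E.
Proof.
move=> nexp delta d1; have d0 : 0 <= delta by apply: le_trans d1.
apply/eqP; rewrite eq_le entropy_d_ge0 // andbT; apply/lee_addgt0Pr => e e0; rewrite add0e.
set dn := Num.truncn delta.
have dn0 : (0 < dn)%N by rewrite truncn_ge_nat.
set E := ((Num.truncn e^-1).+1 + size (sym_gens S))%N.
have E0 : (0 < E)%N by rewrite /E addSn.
have Ee : E%:R^-1 < e.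
  rewrite invf_plt ?posrE ?ltr0n //.
  by apply: lt_le_trans (truncnS_gt _) _; rewrite ler_nat /E leq_addr.
have gens_le : (size (sym_gens S) <= dn * E)%N.
  by rewrite (leq_trans (leq_addl (Num.truncn e^-1).+1 _)) // leq_pmull.
have [r r0 small_ball] := subexp_growth_small_ball nexp gens_le.
have kb0 : (0 < E * r)%N by rewrite muln_gt0 E0.
have Rad_gt : ((2 * (E * r) * dn)%:R < ((2 * (E * r) * dn).+1)%:R :> R) by rewrite ltr_nat.
rewrite entropy_dE; apply: le_trans (ereal_inf_lbound (imageT _ _)) _.
apply: le_trans (entropy_dR_le_ln_growth genS kb0 Rad_gt) _; rewrite lee_fin.
have -> : (E * r * dn = dn * E * r)%N by ring.
have ln_lt : ln (growth S (dn * E * r))%:R < r%:R :> R.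
  apply: ln_lt_of_mul_lt_expR small_ball; rewrite ?ltr0n ?growth_gt0 //.
  by rewrite ler1n muln_gt0 dn0.
apply: le_trans _ (ltW Ee); rewrite natrM invfM -mulrA ler_piMr ?invr_ge0 ?ler0n //.
by rewrite mulrC ler_pdivrMr ?ltr0n // mul1r ltW.
Qed.

(* The net of [t]-separated points in the ball of radius [D r dn] has at least
   [|B(D r dn)| / |B(t)|] points, and by exponential growth [ln] of this is about [r dn]. *)
Lemma entropy_d_exp : exp_growth R S -> exists2 D : nat, (0 < D)%N &
  forall delta : R, 1 <= delta -> (((Num.truncn delta)%:R / D%:R - 1)%:E <= entropy_d S delta)%E.
Proof.
move=> [D hD].
have D0 : (0 < D)%N.
  by case: D hD => // /(_ 0%N) [_]; rewrite mul0r expR0 ler10.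
exists D => // delta d1; have d0 : 0 <= delta by apply: le_trans d1.
set dn := Num.truncn delta.
rewrite entropy_dE; apply: le_ereal_inf_tmp => _ [Rad _ <-].
set t := Num.truncn Rad; set b := growth S t.
set r := (Num.truncn (ln (D%:R : R) + ln (b%:R : R))).+1.
set m := (D * r)%N.
have m0 : (0 < m)%N by rewrite muln_gt0 D0.
set A := fset_set (wball S 1 (m * dn)).
have Afin : finite_set (wball S 1 (m * dn)) := wball_finite genS 1 _.
have [N [NA N_sep N_card]] := separated_net_exists genS t A.
have N_ball x : x \in N -> (wdist S 1 x <= m * dn)%N.
  by move=> /(fsubsetP NA); rewrite in_fset_set // inE.
have card_A : #|` A| = growth S (D * (r * dn)) by rewrite (card_wball genS) /m mulnA.
have N0 : (0 < #|` N|)%N.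
  rewrite lt0n; apply: contraTneq N_card => ->.
  by rewrite mul0n -ltnNge card_A growth_gt0.
have ln_N : r%:R * dn%:R - r%:R <= ln (#|` N|%:R : R).
  apply: (@ln_ge_of_expR_le _ D%:R #|` A|%:R _ b%:R); rewrite ?ltr0n ?growth_gt0 //.
  - by rewrite card_A -natrM; have [] := hD (r * dn)%N.
  - by rewrite -natrM ler_nat.
  - exact/ltW/truncnS_gt.
have Rad_le : Rad <= t.+1%:R by apply/ltW/truncnS_gt.
have dn_le : dn%:R <= delta by rewrite truncn_le.
apply: le_trans _ (entropy_dR_ge_ln_net genS m0 N_ball N_sep dn_le Rad_le N0).
rewrite lee_fin; apply: le_trans (_ : (dn%:R - 1) / D%:R <= _).
  by rewrite mulrBl lerD2l lerN2 mul1r invf_le1 ?ltr0n ?ler1n.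
rewrite /m natrM invfM mulrC -mulrA ler_wpM2l ?invr_ge0 ?ler0n //.
by rewrite ler_pdivlMl ?ltr0n // mulrBr mulr1.
Qed.

Lemma hinf_subexp : ~ exp_growth R S -> hinf R S = 0%E.
Proof.
move=> nexp; rewrite hinfE; apply: cvg_lim => //; apply: cvg_near_cst.
near=> delta; apply: entropy_d_subexp nexp _ _.
by near: delta; apply: nbhs_pinfty_ge; exact: num_real.
Unshelve. all: by end_near. Qed.

Lemma hinf_exp : exp_growth R S -> hinf R S = +oo%E.
Proof.
move=> /entropy_d_exp [D D0 hD]; rewrite hinfE; apply: cvg_lim => //.
apply/cvgeyPge => A; near=> delta.
have d1 : 1 <= delta by near: delta; apply: nbhs_pinfty_ge; exact: num_real.
have dA : (A + 2) * D%:R <= delta by near: delta; apply: nbhs_pinfty_ge; exact: num_real.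
apply: le_trans (hD delta d1); rewrite lee_fin lerBrDr ler_pdivlMr ?ltr0n //.
have := truncnS_gt delta; have : 1 <= D%:R :> R by rewrite ler1n.
rewrite -natr1; nra.
Unshelve. all: by end_near. Qed.

End Dichotomy.

Theorem mainTheorem18 (R : realType) (G : groupType) (S : seq G)
    (hS : generates S) :
  (@exp_growth G R S <-> @hinf G R S = +oo%E) /\
  (~ @exp_growth G R S -> @hinf G R S = 0%E).
Proof.
split; last exact: hinf_subexp.
split; first exact: hinf_exp.
move=> hinf_oo; apply: contrapT => nexp.
by move: hinf_oo; rewrite (hinf_subexp hS nexp).
Qed.
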